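(* Consider the DRRP described in the context for a fixed realization $\xi$, and let $(z,y,b,w,d)$ be an optimal solution in which no RV passes through node $i\in\mathcal{N}_\text{SV}\cap\mathcal{N}_\text{RV}$ at time $t$, i.e. $\sum_{(i,j)\in\mathcal{E}_\text{RV}}z_{i,j}^t=0$ and $\sum_{(j,i)\in\mathcal{E}_\text{RV}}z_{j,i}^{t-1}=0$. Then there is an optimal solution (with the same RV movements $z$) in which $y_i^{+,t}=y_i^{-,t}=0$. Moreover, if $r_i^t>0$ for all pairs $(i,t)$, then no optimal solution has $y_i^{+,t}=y_i^{-,t}>0$ at any $(i,t)$ where no RV is present.
   Context: Data: a directed graph $\mathcal{G}_\text{SV}=(\mathcal{N}_\text{SV},\mathcal{E}_\text{SV})$ of possible shared-vehicle (SV) journeys; a directed graph $\mathcal{G}_\text{RV}=(\mathcal{N}_\text{RV},\mathcal{E}_\text{RV})$ of possible one-step rebalancing-vehicle (RV) movements; a finite set $\mathcal{V}$ of identical RVs, each able to carry an integer number $\overline{b}$ of SVs; horizon $T$; maximum journey duration $K$; integer station capacities $\overline{d}_i$; an integer bound $\overline{y}$; costs $c_{i,j}^t\in\mathbb{R}$ and $r_i^t\ge 0$. For a realization $\xi$, demands $f_{i,j}^{t,k}(\xi)\in\mathbb{N}$ and loss functions $l_{i,j}^{t,k}(\cdot;\xi)$, each a convex piecewise affine function through the origin with breakpoints at integers. Variables $y_i^{\pm,t}$ are indexed by $i\in\mathcal{N}_\text{SV}\cap\mathcal{N}_\text{RV}$ (and are taken to be $0$ where not defined). The DRRP is: minimize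 over $z,y,b,w,d$ $$\sum_{t=1}^T\Big[\sum_{(i,j)\in\mathcal{E}_\text{SV}}\sum_{k=0}^K l_{i,j}^{t,k}(f_{i,j}^{t,k}(\xi)-w_{i,j}^{t,k};\xi)+\sum_{(i,j)\in\mathcal{E}_\text{RV}}c_{i,j}^tz_{i,j}^t+\sum_{i\in\mathcal{N}_\text{SV}\cap\mathcal{N}_\text{RV}}r_i^t(y_i^{+,t}+y_i^{-,t})\Big]$$ subject to: (a) $d_i^t=d_i^{t-1}+\sum_{k=0}^K\big(\sum_{(j,i)\in\mathcal{E}_\text{SV}}w_{j,i}^{t-k,k}-\sum_{(i,j)\in\mathcal{E}_\text{SV}}w_{i,j}^{t,k}\big)+y_i^{-,t}-y_i^{+,t}$ for $t=1,\dots,T$, $i\in\mathcal{N}_\text{SV}$; (b) $\sum_{(i,j)\in\mathcal{E}_\text{RV}}b_{i,j}^t=\sum_{(j,i)\in\mathcal{E}_\text{RV}}b_{j,i}^{t-1}+y_i^{+,t}-y_i^{-,t}$ for $t=1,\dots,T$, $i\in\mathcal{N}_\text{RV}$; (c) $\sum_{(i,j)\in\mathcal{E}_\text{RV}}z_{i,j}^t=\sum_{(j,i)\in\mathcal{E}_\text{RV}}z_{j,i}^{t-1}$ for $t=1,\dots,T$, $i\in\mathcal{N}_\text{RV}$; (d) $0\le b_{i,j}^t\le\overline{b}z_{i,j}^t$ for $t=0,\dots,T$, $(i,j)\in\mathcal{E}_\text{RV}$, with integers $b_{i,j}^0$ given; (e) $0\le w_{i,j}^{t,k}\le f_{i,j}^{t,k}(\xi)$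 for $t=1,\dots,T$, $k=0,\dots,K$, $(i,j)\in\mathcal{E}_\text{SV}$, with $w_{i,j}^{t,k}$ given for $1-K\le t\le 0$, $-t<k\le K$; (f) $0\le d_i^t\le\overline{d}_i$ for $t=0,\dots,T$, with integers $d_i^0$ given; (g) $0\le y_i^{+,t}\le\overline{y}$, $0\le y_i^{-,t}\le\overline{y}$; (h) integers $z_{i,j}^0$ given with $\sum_{i,j}z_{i,j}^0=|\mathcal{V}|$; (i) all $w,y,b,z$ integer-valued. *)

From HB Require Import structures.
From mathcomp Require Import all_boot all_order all_algebra.
From mathcomp Require Import reals.
Set Implicit Arguments.
Unset Strict Implicit.
Unset Printing Implicit Defensive.
Import Order.TTheory GRing.Theory Num.Theory.
Local Open Scope ring_scope.

Definition convex_fun (R : realType) (g : R -> R) : Prop :=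
  forall (x y a : R), 0 <= a <= 1 ->
    g (a * x + (1 - a) * y) <= a * g x + (1 - a) * g y.

Definition int_pw_affine (R : realType) (g : R -> R) : Prop :=
  forall (n : int) (x : R), n%:~R <= x <= (n + 1)%:~R ->
    g x = g n%:~R + (x - n%:~R) * (g (n + 1)%:~R - g n%:~R).

Definition admissible_loss (R : realType) (g : R -> R) : Prop :=
  [/\ convex_fun g, g 0 = 0 & int_pw_affine g].

(* Times are integers; edges are pairs of nodes of a finite node universe.
   Vehicles are identical, so only their number nveh = |V| matters. *)
Record instance (R : realType) (node : finType) := Instance {
  N_SV : {set node};
  N_RV : {set node};
  E_SV : {set node * node};
  E_RV : {set node * node};
  nveh : nat;
  bbar : int;                                (* RV carrying capacity *)
  Thor : nat;
  Kmax : nat;                                (* max journey duration K *)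
  dbar : node -> int;                        (* station capacities *)
  ybar : int;
  cost_c : node * node -> int -> R;
  cost_r : node -> int -> R;
  dem : node * node -> int -> nat -> nat;
  loss : node * node -> int -> nat -> R -> R;
  z_init : node * node -> int;
  b_init : node * node -> int;
  d_init : node -> int;
  w_init : node * node -> int -> nat -> int  (* w^{t,k}, 1-K <= t <= 0, -t < k <= K *)
}.

Definition wf_instance (R : realType) (node : finType) (I : instance R node) : Prop :=
  [/\ (forall e, e \in E_SV I -> (e.1 \in N_SV I) && (e.2 \in N_SV I)),
      (forall e, e \in E_RV I -> (e.1 \in N_RV I) && (e.2 \in N_RV I)),
      (\sum_(e in E_RV I) z_init I e = (nveh I)%:Z),
      (forall i t, 0 <= cost_r I i t) &
      (forall e t k, admissible_loss (loss I e t k))].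

(* w, y, b, z are integer-valued; d is real-valued (integrality of d is not imposed). *)
Record sol (R : realType) (node : finType) := Sol {
  sz  : node * node -> int -> int;
  syp : node -> int -> int;
  sym : node -> int -> int;
  sb  : node * node -> int -> int;
  sw  : node * node -> int -> nat -> int;
  sd  : node -> int -> R
}.

Definition in_time (T : nat) (t : int) : bool := (1 <= t) && (t <= T%:Z).

Definition feasible (R : realType) (node : finType) (I : instance R node)
    (s : sol R node) : Prop :=
  let T := Thor I in let K := Kmax I in
  (forall i t, i \in N_SV I -> in_time T t ->
     sd s i t = sd s i (t - 1)
       + (\sum_(k < K.+1)
            (\sum_(e in E_SV I | e.2 == i) sw s e (t - (k : nat)%:Z) k
             - \sum_(e in E_SV I | e.1 == i) sw s e t k))%:~R
       + (sym s i t - syp s i t)%:~R) /\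
  (forall i t, i \in N_RV I -> in_time T t ->
     \sum_(e in E_RV I | e.1 == i) sb s e t
       = \sum_(e in E_RV I | e.2 == i) sb s e (t - 1) + syp s i t - sym s i t) /\
  (forall i t, i \in N_RV I -> in_time T t ->
     \sum_(e in E_RV I | e.1 == i) sz s e t
       = \sum_(e in E_RV I | e.2 == i) sz s e (t - 1)) /\
  (forall e t, e \in E_RV I -> 0 <= t <= (T : int) ->
     0 <= sb s e t <= bbar I * sz s e t) /\
  (forall e, e \in E_RV I -> sb s e 0 = b_init I e) /\
  (forall e t (k : nat), e \in E_SV I -> in_time T t -> (k <= K)%N ->
     0 <= sw s e t k <= (dem I e t k)%:Z) /\
  (forall e t (k : nat), e \in E_SV I -> 1 - (K : int) <= t <= 0 ->
     - t < (k : int) -> (k <= K)%N -> sw s e t k = w_init I e t k) /\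
  (forall i t, i \in N_SV I -> 0 <= t <= (T : int) ->
     0 <= sd s i t <= (dbar I i)%:~R) /\
  (forall i, i \in N_SV I -> sd s i 0 = (d_init I i)%:~R) /\
  (forall i t, i \in N_SV I :&: N_RV I -> in_time T t ->
     0 <= syp s i t <= ybar I /\ 0 <= sym s i t <= ybar I) /\
  (forall i t, i \notin N_SV I :&: N_RV I -> in_time T t ->
     syp s i t = 0 /\ sym s i t = 0) /\
  (forall e, e \in E_RV I -> sz s e 0 = z_init I e).

Definition objective (R : realType) (node : finType) (I : instance R node)
    (s : sol R node) : R :=
  \sum_(1 <= t < (Thor I).+1)
    ( \sum_(e in E_SV I) \sum_(k < (Kmax I).+1)
          loss I e t k ((dem I e t k)%:R - (sw s e t k)%:~R)
    + \sum_(e in E_RV I) cost_c I e t * (sz s e t)%:~R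
    + \sum_(i in N_SV I :&: N_RV I)
          cost_r I i t * ((syp s i t)%:~R + (sym s i t)%:~R) ).

Definition optimal (R : realType) (node : finType) (I : instance R node)
    (s : sol R node) : Prop :=
  feasible I s /\ forall s' : sol R node, feasible I s' -> objective I s <= objective I s'.

Definition no_RV_at (R : realType) (node : finType) (I : instance R node)
    (s : sol R node) (i : node) (t : int) : Prop :=
  \sum_(e in E_RV I | e.1 == i) sz s e t = 0 /\
  \sum_(e in E_RV I | e.2 == i) sz s e (t - 1) = 0.

From HB Require Import structures.
From mathcomp Require Import all_boot all_order all_algebra.
From mathcomp Require Import reals.
From mathcomp Require Import zify.
Import Order.TTheory GRing.Theory Num.Theory.
Local Open Scope ring_scope.

(* If no RV leaves node i at time t or arrives there from time t - 1, the RV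
   capacity constraint forces the SV loads on all RV arcs touching (i, t) to
   vanish, so the RV flow constraint (b) at (i, t) reads y_i^{+,t} = y_i^{-,t}.
   The inventory constraint (a) only sees the difference y_i^{-,t} - y_i^{+,t},
   hence setting both to 0 keeps the solution feasible and lowers the objective
   by r_i^t (y_i^{+,t} + y_i^{-,t}) >= 0, strictly when r_i^t > 0 and the
   common value is positive. *)

Section ClearLoading.
Set Implicit Arguments.
Variables (R : realType) (node : finType) (I : instance R node).
Implicit Types (s : sol R node) (i : node) (t : int).

Definition clear_y s i t : sol R node :=
  let off y j u := if (j == i) && (u == t) then 0 else y j u in
  @Sol R node (sz s) (off (syp s)) (off (sym s)) (sb s) (sw s) (sd s).

Definition stage_cost s t : R :=
  \sum_(e in E_SV I) \sum_(k < (Kmax I).+1)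
      loss I e t k ((dem I e t k)%:R - (sw s e t k)%:~R)
  + \sum_(e in E_RV I) cost_c I e t * (sz s e t)%:~R
  + \sum_(j in N_SV I :&: N_RV I)
      cost_r I j t * ((syp s j t)%:~R + (sym s j t)%:~R).

Lemma objectiveE s :
  objective I s = \sum_(1 <= t < (Thor I).+1) stage_cost s t.
Proof. by []. Qed.

Lemma feasible_sum_sb_eq0 s {P : pred (node * node)} {t : int} :
  feasible I s -> 0 <= t <= (Thor I : int) ->
  \sum_(e in E_RV I | P e) sz s e t = 0 ->
  \sum_(e in E_RV I | P e) sb s e t = 0.
Proof.
move=> [_ [_ [_ [cap _]]]] t_range sum_z0.
apply/eqP; rewrite eq_le; apply/andP; split; last first.
  by apply: sumr_ge0 => e /andP[eE _]; case/andP: (cap e t eE t_range).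
apply: (le_trans (y := \sum_(e in E_RV I | P e) bbar I * sz s e t)).
  by apply: ler_sum => e /andP[eE _]; case/andP: (cap e t eE t_range).
by rewrite -mulr_sumr sum_z0 mulr0.
Qed.

Lemma feasible_no_RV_syp_eq_sym s i t :
  feasible I s -> i \in N_RV I -> in_time (Thor I) t -> no_RV_at I s i t ->
  syp s i t = sym s i t.
Proof.
move=> feas iRV t_in [no_out no_in].
have [_ [flow_b _]] := feas.
have := flow_b i t iRV t_in; move: t_in => /andP[t_ge1 t_leT].
rewrite (feasible_sum_sb_eq0 feas _ no_out); last by apply/andP; split; lia.
rewrite (feasible_sum_sb_eq0 feas _ no_in); last by apply/andP; split; lia.
lia.
Qed.

Lemma clear_y_feasible s i t :
  feasible I s -> i \in N_SV I :&: N_RV I -> in_time (Thor I) t ->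
  no_RV_at I s i t -> feasible I (clear_y s i t).
Proof.
move=> feas iN t_in no_RV.
have y_eq := feasible_no_RV_syp_eq_sym feas (setIdP iN).2 t_in no_RV.
have net_y j u :
    sym (clear_y s i t) j u - syp (clear_y s i t) j u = sym s j u - syp s j u.
  by rewrite /=; case: ifP => // /andP[/eqP-> /eqP->]; rewrite y_eq !subrr.
case: feas => inv_a [flow_b [flow_c [cap [b0 [w_rng [w0 [d_rng [d0
  [y_rng [y_out z0]]]]]]]]]].
split; first by move=> j u jSV u_in; rewrite net_y; exact: inv_a.
split.
  by move=> j u jRV u_in; have := flow_b j u jRV u_in; have := net_y j u => /=; lia.
do 7 (split; first by []).
split.
  move=> j u jN u_in /=; case: ifP => _; last exact: y_rng.
  by have [/andP[y0 y_le] _] := y_rng i t iN t_in; rewrite lexx (le_trans y0 y_le).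
split; last by [].
move=> j u jN u_in /=; have /negbTE-> : j != i by apply: contraNneq jN => ->.
exact: y_out.
Qed.

Lemma feasible_y_sum_ge0 s i t :
  feasible I s -> i \in N_SV I :&: N_RV I -> in_time (Thor I) t ->
  0 <= (syp s i t)%:~R + (sym s i t)%:~R :> R.
Proof.
move=> [_ [_ [_ [_ [_ [_ [_ [_ [_ [y_rng _]]]]]]]]]] iN t_in.
have [/andP[yp_ge0 _] /andP[ym_ge0 _]] := y_rng i t iN t_in.
by rewrite addr_ge0 // ler0z.
Qed.

Lemma stage_cost_clear_y s i t u :
  i \in N_SV I :&: N_RV I ->
  stage_cost s u = stage_cost (clear_y s i t) u
    + (if u == t then cost_r I i t * ((syp s i t)%:~R + (sym s i t)%:~R) else 0).
Proof.
move=> iN; rewrite /stage_cost /= -!addrA; congr (_ + (_ + _)).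
have [->|ut] := eqVneq u t; last first.
  by rewrite addr0; apply: eq_bigr => j _; rewrite andbF.
rewrite (bigD1 i iN) (bigD1 i iN) /= eqxx mulr0z addr0 mulr0 add0r addrC.
by congr (_ + _); apply: eq_bigr => j /andP[_ /negbTE->].
Qed.

Lemma objective_clear_y s i t :
  i \in N_SV I :&: N_RV I -> in_time (Thor I) t ->
  objective I s = objective I (clear_y s i t)
    + cost_r I i t * ((syp s i t)%:~R + (sym s i t)%:~R).
Proof.
case: t => [n|//] iN /andP[n_ge1 n_leT].
rewrite !objectiveE (eq_bigr _ (fun (u : nat) _ => stage_cost_clear_y s n u iN)).
rewrite big_split /=; congr (_ + _).
under eq_bigr do rewrite eqz_nat.
rewrite -big_mkcond big_nat1_eq.
by have -> : (1 <= n < (Thor I).+1)%N by apply/andP; split; lia.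
Qed.

End ClearLoading.

Theorem lemma2 (R : realType) (node : finType) (I : instance R node) :
  wf_instance I ->
  (forall (s : sol R node) (i : node) (t : int),
     optimal I s -> i \in N_SV I :&: N_RV I -> in_time (Thor I) t ->
     no_RV_at I s i t ->
     exists s' : sol R node,
       [/\ optimal I s', sz s' = sz s, syp s' i t = 0 & sym s' i t = 0]) /\
  ((forall i t, i \in N_SV I :&: N_RV I -> in_time (Thor I) t -> 0 < cost_r I i t) ->
   forall (s : sol R node) (i : node) (t : int),
     optimal I s -> i \in N_SV I :&: N_RV I -> in_time (Thor I) t ->
     no_RV_at I s i t ->
     ~ (syp s i t = sym s i t /\ 0 < syp s i t)).
Proof.
move=> [_ _ _ r_ge0 _]; split.
  move=> s i t [feas opt] iN t_in no_RV.
  exists (clear_y s i t); split=> //=; rewrite ?eqxx //.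
  split; first exact: clear_y_feasible.
  move=> s' feas'; apply: le_trans (opt s' feas').
  rewrite (objective_clear_y I s t iN t_in) lerDl.
  by apply: mulr_ge0; [exact: r_ge0 | exact: feasible_y_sum_ge0 feas iN t_in].
move=> r_gt0 s i t [feas opt] iN t_in no_RV [y_eq yp_gt0].
have := opt _ (clear_y_feasible feas iN t_in no_RV).
rewrite (objective_clear_y I s t iN t_in) gerDl leNgt => /negP; apply.
by rewrite mulr_gt0 ?r_gt0 // -y_eq addr_gt0 // ltr0z.
Qed.
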